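(* Let $A_1,A_2\in\mathbb{S}^n$ be such that there is no permutation matrix $\Pi\in\mathrm{Sym}(n)$ with $A_1=\Pi A_2\Pi^T$. Then there exists $P\in\mathbb{S}^n$ such that $\Theta_P(A_1)\neq\Theta_P(A_2)$.
   Context: $\mathbb{S}^n$ denotes the space of real symmetric $n\times n$ matrices (adjacency matrices of weighted graphs on $n$ nodes, with diagonal entries as node weights). $\mathrm{Sym}(n)$ denotes the group of $n\times n$ permutation matrices. For $P\in\mathbb{S}^n$, $\Theta_P(A)=\max_{\Pi\in\mathrm{Sym}(n)}\mathrm{tr}(P\Pi A\Pi^T)$. *)

From HB Require Import structures.
From mathcomp Require Import all_boot all_order all_algebra all_fingroup.
Set Implicit Arguments. Unset Strict Implicit. Unset Printing Implicit Defensive.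
Import Order.TTheory GRing.Theory Num.Theory.
Local Open Scope ring_scope.

Definition symmx_prop (R : realFieldType) (n : nat) (A : 'M[R]_n) : Prop := A^T = A.

Definition pconj (R : realFieldType) (n : nat) (s : 'S_n) (A : 'M[R]_n) : 'M[R]_n :=
  perm_mx s *m A *m (perm_mx s)^T.

(* The maximum is taken over the (nonempty) finite set 'S_n; the seed of the
   fold is the value at the identity permutation, which is itself one of the
   terms, so this is exactly the maximum. *)
Definition Theta (R : realFieldType) (n : nat) (P A : 'M[R]_n) : R :=
  \big[Num.max/(\tr (P *m A))]_(s : 'S_n) \tr (P *m pconj s A).

From HB Require Import structures.
From mathcomp Require Import all_boot all_order all_algebra all_fingroup.
From mathcomp Require Import ring.
Import Order.TTheory GRing.Theory Num.Theory.
Local Open Scope ring_scope.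
Set Implicit Arguments. Unset Strict Implicit.

(* For symmetric X, Y one has
   2 tr(XY) <= tr(X^2) + tr(Y^2), with equality iff X = Y, and conjugation by
   a permutation matrix preserves tr(Y^2); hence Theta_A(A) = tr(A^2).  If
   Theta_{A1} and Theta_{A2} both failed to separate A1 and A2, some
   Pi A2 Pi^T would realise tr(A1^2) = tr(A1 Pi A2 Pi^T), forcing
   tr(A1^2) <= tr(A2^2); symmetrically tr(A2^2) <= tr(A1^2), so equality holds
   throughout and A1 = Pi A2 Pi^T. *)

Section FrobeniusInnerProduct.
Variables (R : realFieldType) (m n : nat).
Implicit Types X Y : 'M[R]_(m, n).

Lemma mxtrace_mul_trmx_sqr X : \tr (X *m X^T) = \sum_i \sum_j X i j ^+ 2.
Proof.
by apply: eq_bigr => i _; rewrite mxE; apply: eq_bigr => j _; rewrite mxE expr2.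
Qed.

Lemma mxtrace_mul_trmx_ge0 X : 0 <= \tr (X *m X^T).
Proof.
rewrite mxtrace_mul_trmx_sqr; apply: sumr_ge0 => i _.
by apply: sumr_ge0 => j _; apply: sqr_ge0.
Qed.

Lemma mxtrace_mul_trmx_eq0 X : (\tr (X *m X^T) == 0) = (X == 0).
Proof.
apply/eqP/eqP => [|->]; last by rewrite mul0mx mxtrace0.
rewrite mxtrace_mul_trmx_sqr => X0; apply/matrixP => i j; rewrite mxE.
have Xi0 := psumr_eq0P (fun i _ => sumr_ge0 _ (fun j _ => sqr_ge0 (X i j))) X0.
have := psumr_eq0P (fun j _ => sqr_ge0 (X i j)) (Xi0 i isT) (i := j) isT.
by move/eqP; rewrite sqrf_eq0 => /eqP.
Qed.

Lemma mxtrace_mul_trmxC X Y : \tr (Y *m X^T) = \tr (X *m Y^T).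
Proof. by rewrite -mxtrace_tr trmx_mul trmxK. Qed.

Lemma mxtrace_subr_mul_trmx X Y :
  \tr ((X - Y) *m (X - Y)^T) =
  \tr (X *m X^T) + \tr (Y *m Y^T) - \tr (X *m Y^T) *+ 2.
Proof.
rewrite linearB /= mulmxBl !mulmxBr !linearB /= (mxtrace_mul_trmxC Y X).
by rewrite mulr2n; ring.
Qed.

Lemma mxtrace_mul_trmx_leif X Y :
  \tr (X *m Y^T) *+ 2 <= \tr (X *m X^T) + \tr (Y *m Y^T) ?= iff (X == Y).
Proof.
split; first by rewrite -subr_ge0 -mxtrace_subr_mul_trmx mxtrace_mul_trmx_ge0.
by rewrite eq_sym -subr_eq0 -mxtrace_subr_mul_trmx mxtrace_mul_trmx_eq0 subr_eq0.
Qed.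

End FrobeniusInnerProduct.

Section PermutationConjugation.
Variables (R : realFieldType) (n : nat).
Implicit Types A B P : 'M[R]_n.

Lemma perm_mx_mulVmx (s : 'S_n) : (perm_mx s)^T *m perm_mx s = 1%:M :> 'M[R]_n.
Proof. by rewrite tr_perm_mx -perm_mxM mulVg perm_mx1. Qed.

Lemma pconj1 A : pconj 1%g A = A.
Proof. by rewrite /pconj perm_mx1 mul1mx trmx1 mulmx1. Qed.

Lemma pconjM s A B : pconj s (A *m B) = pconj s A *m pconj s B.
Proof.
by rewrite /pconj !mulmxA -[_ *m (perm_mx s)^T *m _]mulmxA perm_mx_mulVmx mulmx1.
Qed.

Lemma mxtrace_pconj s A : \tr (pconj s A) = \tr A.
Proof. by rewrite /pconj mxtrace_mulC mulmxA perm_mx_mulVmx mul1mx. Qed.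

Lemma pconj_sym s A : symmx_prop A -> symmx_prop (pconj s A).
Proof. by move=> symA; rewrite /symmx_prop /pconj !trmx_mul trmxK symA mulmxA. Qed.

Lemma le_Theta s P A : \tr (P *m pconj s A) <= Theta P A.
Proof. by rewrite /Theta (bigD1 s) //= le_max lexx. Qed.

Lemma Theta_le P A M :
  (forall s, \tr (P *m pconj s A) <= M) -> Theta P A <= M.
Proof.
move=> leM; rewrite /Theta; elim/big_rec: _ => [|s x _ lexM].
  by have := leM 1%g; rewrite pconj1.
by rewrite ge_max leM lexM.
Qed.

Lemma Theta_attained P A : exists s, Theta P A = \tr (P *m pconj s A).
Proof.
rewrite /Theta; elim/big_rec: _ => [|t x _ [s ->]]; first by exists 1%g; rewrite pconj1.
by case: leP => _; [exists s | exists t].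
Qed.

Lemma mxtrace_mul_pconj_leif s A B : symmx_prop A -> symmx_prop B ->
  \tr (A *m pconj s B) *+ 2 <= \tr (A *m A) + \tr (B *m B)
    ?= iff (A == pconj s B).
Proof.
move=> symA symB; have symsB := pconj_sym s symB.
have := mxtrace_mul_trmx_leif A (pconj s B).
by rewrite symA symsB -pconjM mxtrace_pconj.
Qed.

Lemma Theta_self P : symmx_prop P -> Theta P P = \tr (P *m P).
Proof.
move=> symP; apply/le_anti/andP; split; last first.
  by have := le_Theta 1%g P P; rewrite pconj1.
apply: Theta_le => s; rewrite -(ler_pMn2r (n := 2)) // [leRHS]mulr2n.
exact: (mxtrace_mul_pconj_leif s symP symP).
Qed.

Lemma Theta_cross_eq_self A B : symmx_prop A -> symmx_prop B ->
  Theta A B = Theta A A ->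
  exists s, \tr (A *m A) <= \tr (B *m B) ?= iff (A == pconj s B).
Proof.
move=> symA symB; have [s ->] := Theta_attained A B; rewrite Theta_self // => eqAA.
exists s; have := mxtrace_mul_pconj_leif s symA symB.
by rewrite eqAA mulr2n (mono_leif (lerD2l _)).
Qed.

End PermutationConjugation.

Theorem lemma1 (R : realFieldType) (n : nat) (A1 A2 : 'M[R]_n) :
  symmx_prop A1 -> symmx_prop A2 ->
  (forall s : 'S_n, A1 <> pconj s A2) ->
  exists P : 'M[R]_n, symmx_prop P /\ Theta P A1 <> Theta P A2.
Proof.
move=> symA1 symA2 A1_not_conj.
have [e1|] := eqVneq (Theta A1 A2) (Theta A1 A1); last first.
  by move/eqP => ne; exists A1; split => // /esym.
have [e2|] := eqVneq (Theta A2 A1) (Theta A2 A2); last first.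
  by move/eqP => ne; exists A2.
have [s le12] := Theta_cross_eq_self symA1 symA2 e1.
have [? le21] := Theta_cross_eq_self symA2 symA1 e2.
have eqtr : \tr (A1 *m A1) == \tr (A2 *m A2) by rewrite eq_le le12 le21.
by move: eqtr; rewrite le12 => /eqP /A1_not_conj.
Qed.
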